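(* Let $\tau_i$ be an HC task that switches to HC mode at time $t_i\le t$, and suppose $t-t_i\ge D_i$. Then $\tau_i$ generates maximal demand during $[0,t)$ when its first job is released at time $t-D_i-\lfloor (t-D_i)/T_i\rfloor\cdot T_i$ and all successive jobs are released as soon as possible (every $T_i$ time units thereafter).
   Context: A mixed-criticality sporadic task is $\tau_i=(T_i,L_i,\{C_i^L,C_i^H\},D_i)$: jobs are released with minimum separation $T_i$, $L_i\in\{LC,HC\}$, $D_i\le T_i$ is the relative deadline, and $C_i^L<C_i^H$ for HC tasks. Each task has a tightened deadline $D_i^L\le D_i$. An HC task is in LC mode until the instant $t_i$ at which some job requests to execute for more than $C_i^L$; from then on it is in HC mode. While in LC mode, a job released at $r$ must receive $C_i^L$ time units by $r+D_i^L$; once the task is in HC mode, a job may require up to $C_i^H$ units in total, to be received by its actual deadline $r+D_i$. The demand of a task during $[0,t)$ is the amount of execution that must be completed within $[0,t)$ in order to meet all of its deadlines that fall in $[0,t)$; execution with deadline after $t$ contributes no demand. ''Maximal demand'' is over all legal release sequences (minimum separation $T_i$) and all legal execution behaviours. *)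

From mathcomp Require Import all_boot all_order all_algebra.
Set Implicit Arguments. Unset Strict Implicit. Unset Printing Implicit Defensive.
Import Order.TTheory GRing.Theory Num.Theory.
Local Open Scope ring_scope.

(* A release sequence of a sporadic task: r k is the release time of the k-th
   job; releases are non-negative and separated by at least T.  (A task that
   stops releasing is modelled by pushing the remaining releases beyond the
   horizon t; they then contribute no demand.) *)
Definition legal_release (R : archiRealFieldType) (T : R) (r : nat -> R) : Prop :=
  0 <= r 0%N /\ forall k : nat, r k + T <= r k.+1.

(* Job k is in LC mode (an "LC job") iff its tightened (LC) deadline r k + DL
   lies at or before the mode switch instant ti; it must then receive its LC
   budget by r k + DL.  All other jobs (active at, or released after, the
   switch) are handled in HC mode: up to CH units by the actual deadline r k + D. *)
Definition lc_job (R : archiRealFieldType) (DL ti : R) (r : nat -> R) (k : nat) : bool :=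
  r k + DL <= ti.

Definition legal_exec (R : archiRealFieldType) (CL CH DL ti : R) (r : nat -> R)
    (c : nat -> R) : Prop :=
  forall k : nat, 0 <= c k /\ c k <= (if lc_job DL ti r k then CL else CH).

Definition job_demand (R : archiRealFieldType) (D DL ti t : R) (r : nat -> R)
    (c : nat -> R) (k : nat) : R :=
  if lc_job DL ti r k then (if r k + DL <= t then c k else 0)
  else (if r k + D <= t then c k else 0).

(* Demand during [0,t).  Since r k >= k * T, every job with index
   k > t / T is released after t and contributes nothing, so summing over
   the first truncn (t / T) + 1 jobs covers all jobs. *)
Definition demand (R : archiRealFieldType) (T D DL ti t : R) (r : nat -> R)
    (c : nat -> R) : R :=
  \sum_(k < (Num.truncn (t / T)).+1) job_demand D DL ti t r c k.

Definition pattern (R : archiRealFieldType) (T D t : R) : nat -> R :=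
  fun k => t - D - (Num.floor ((t - D) / T))%:~R * T + k%:R * T.

From mathcomp Require Import all_boot all_order all_algebra.
From mathcomp Require Import ring lra zify.
Set Implicit Arguments. Unset Strict Implicit. Unset Printing Implicit Defensive.
Import Order.TTheory GRing.Theory Num.Theory.
Local Open Scope ring_scope.

(* Because the switch happens at least D before t, a job contributes to the
   demand in [0,t) exactly when it is released by t - D, and then with its
   whole execution; its budget (CL or CH) is nondecreasing in its release
   time.  In any legal release sequence the jobs released by t - D form a
   prefix 0..l-1 with r k <= t - D - (l-1-k) T.  The pattern has n+1 such
   jobs, where n = floor((t-D)/T), released as late as possible:
   job n - i at t - D - i T.  Matching the k-th of the l released jobs with
   pattern job k + (n+1-l), which is released no earlier, shows that the
   pattern with full budgets dominates. *)

Lemma ler_sum_shift (R : numDomainType) (f g : nat -> R) (l s M : nat) :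
  (l + s <= M)%N -> (forall k, 0 <= g k) ->
  (forall k, (k < l)%N -> f k <= g (k + s)%N) ->
  (forall k, (l <= k)%N -> f k <= 0) ->
  \sum_(k < M) f k <= \sum_(k < M) g k.
Proof.
move=> lsM g_ge0 fg f_le0; rewrite -!(big_mkord xpredT).
rewrite (big_cat_nat _ (n := l)) //=; last lia.
rewrite [X in _ <= X](big_cat_nat _ (n := s)) //=; last lia.
rewrite [\sum_(s <= i < M) g i](big_cat_nat _ (n := l + s)) //=; last lia.
have -> : \sum_(s <= k < l + s) g k = \sum_(0 <= k < l) g (k + s)%N.
  by rewrite -{1}[s]add0n big_addn addnK.
have f_rest : \sum_(l <= k < M) f k <= 0.
  by rewrite big_nat_cond; apply: sumr_le0 => k /andP[/andP[lk _] _]; apply: f_le0.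
have f_head : \sum_(0 <= k < l) f k <= \sum_(0 <= k < l) g (k + s)%N.
  by apply: ler_sum_nat => k /andP[_ kl]; apply: fg.
have g_pre : 0 <= \sum_(0 <= k < s) g k by apply: sumr_ge0.
have g_post : 0 <= \sum_(l + s <= k < M) g k by apply: sumr_ge0.
apply: le_trans (lerD f_head f_rest) _.
by rewrite addr0 addrCA lerDl addr_ge0.
Qed.

Section Demand.

Variable R : archiRealFieldType.
Implicit Types (T D DL CL CH ti t x : R) (r c : nat -> R).

Lemma floor_truncn x : 0 <= x -> (Num.floor x)%:~R = (Num.truncn x)%:R :> R.
Proof. by move=> x0; rewrite truncn_floor x0 natr_absz ger0_norm ?floor_ge0. Qed.

Lemma legal_release_shift T r i d :
  legal_release T r -> r i + d%:R * T <= r (i + d)%N.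
Proof.
move=> [_ rT]; elim: d => [|d IH]; first by rewrite mul0r addr0 addn0.
rewrite addnS -natr1 mulrDl mul1r addrA; exact: le_trans (lerD IH _) (rT _).
Qed.

Lemma legal_release_prefix T x r : 0 < T -> 0 <= x -> legal_release T r ->
  exists2 l, (l <= (Num.truncn (x / T)).+1)%N & forall k, (r k <= x) = (k < l)%N.
Proof.
move=> T0 x0 rP; have r0 := rP.1.
set n := Num.truncn (x / T).
have late : x < r n.+1.
  have := legal_release_shift 0 n.+1 rP; have := truncnS_gt (x / T).
  rewrite ltr_pdivrMr // add0n; lra.
have [l xl l_min] := ex_minnP (ex_intro (fun k => x < r k) _ late).
exists l; first exact: l_min.
move=> k; apply/idP/idP => [rk | kl].
  rewrite ltnNge; apply/negP => /subnKC lk.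
  have := legal_release_shift l (k - l) rP; rewrite lk.
  have : 0 <= (k - l)%:R * T by rewrite mulr_ge0 // ltW.
  lra.
by rewrite leNgt; apply/negP => /l_min; rewrite leqNgt kl.
Qed.

Definition mode_budget CL CH DL ti x : R := if x + DL <= ti then CL else CH.

Lemma mode_budget_ge0 CL CH DL ti x :
  0 <= CL -> CL <= CH -> 0 <= mode_budget CL CH DL ti x.
Proof. by rewrite /mode_budget; case: ifP => _ //; apply: le_trans. Qed.

Lemma le_mode_budget CL CH DL ti : CL <= CH ->
  {homo mode_budget CL CH DL ti : x y / x <= y}.
Proof.
move=> CLH x y xy; rewrite /mode_budget.
case: ifP => xti; case: ifP => yti //.
by move/negbT: xti; rewrite -ltNge; lra.
Qed.

Lemma job_demandE D DL ti t : 0 <= DL -> 0 <= D -> ti <= t - D ->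
  forall r c k, job_demand D DL ti t r c k = if r k <= t - D then c k else 0.
Proof.
move=> DL0 D0 tiD r c k; rewrite /job_demand /lc_job lerBrDr.
case: ifP => // lc; rewrite !ifT //; lra.
Qed.

Lemma pattern_subE T D t i : 0 < T -> 0 <= t - D ->
  (i <= Num.truncn ((t - D) / T))%N ->
  pattern T D t (Num.truncn ((t - D) / T) - i) = t - D - i%:R * T.
Proof.
move=> T0 tD iN; rewrite /pattern floor_truncn; last by rewrite divr_ge0 // ltW.
by rewrite natrB //; ring.
Qed.

Lemma pattern_le T D t j : 0 < T -> 0 <= t - D ->
  (j <= Num.truncn ((t - D) / T))%N -> pattern T D t j <= t - D.
Proof.
move=> T0 tD jN; rewrite -(subKn jN) pattern_subE ?leq_subr //.
by rewrite gerBl mulr_ge0 // ltW.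
Qed.

Lemma legal_release_pattern T D t : 0 < T -> 0 <= t - D ->
  legal_release T (pattern T D t).
Proof.
move=> T0 tD; have := pattern_subE T0 tD (leqnn (Num.truncn ((t - D) / T))).
rewrite subnn => p0; split.
  have nT : (Num.truncn ((t - D) / T))%:R * T <= t - D.
    by rewrite -ler_pdivlMr // truncn_le divr_ge0 // ltW.
  by rewrite p0; lra.
by move=> k; rewrite /pattern -natr1 [(_ + 1) * T]mulrDl mul1r addrA.
Qed.

Lemma le_pattern_prefix T D t r l k :
  0 < T -> 0 <= t - D -> legal_release T r ->
  (l <= (Num.truncn ((t - D) / T)).+1)%N -> r l.-1 <= t - D -> (k < l)%N ->
  r k <= pattern T D t (k + ((Num.truncn ((t - D) / T)).+1 - l)).
Proof.
set n := Num.truncn _ => T0 tD rP lN rl kl.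
have -> : (k + (n.+1 - l) = n - (l.-1 - k))%N by lia.
rewrite pattern_subE //; last lia.
have := legal_release_shift k (l.-1 - k) rP; rewrite subnKC; last lia.
lra.
Qed.

End Demand.

Theorem lemma3 (R : archiRealFieldType) (T D DL CL CH ti t : R) :
  0 < T -> 0 < DL -> DL <= D -> D <= T ->
  0 <= CL -> CL < CH ->
  0 <= ti -> ti <= t -> D <= t - ti ->
  legal_release T (pattern T D t) /\
  exists c0 : nat -> R,
    legal_exec CL CH DL ti (pattern T D t) c0 /\
    forall (r c : nat -> R),
      legal_release T r -> legal_exec CL CH DL ti r c ->
      demand T D DL ti t r c <= demand T D DL ti t (pattern T D t) c0.
Proof.
move=> T0 DL0 DLD _ CL0 /ltW CLH ti0 _ Dtti.
have tD : 0 <= t - D by lra.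
have [D0 tiD] : 0 <= D /\ ti <= t - D by split; lra.
set n := Num.truncn ((t - D) / T).
split; first exact: legal_release_pattern.
exists (fun k => mode_budget CL CH DL ti (pattern T D t k)); split.
  by move=> k; rewrite mode_budget_ge0.
have demandE := job_demandE (ltW DL0) D0 tiD.
move=> r c rP cP; have [l lN rl] := legal_release_prefix T0 tD rP.
apply: (@ler_sum_shift _ _ _ l (n.+1 - l)) => [|k|k kl|k lk].
- rewrite subnKC // ltnS le_truncn // ler_pM2r ?invr_gt0 //; lra.
- by rewrite demandE; case: ifP => _ //; rewrite mode_budget_ge0.
- have rk := le_pattern_prefix T0 tD rP lN _ kl.
  rewrite !demandE rl kl pattern_le //; last lia.
  apply: le_trans (cP k).2 (le_mode_budget _ _ CLH (rk _)) => //.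
  by rewrite rl prednK // (leq_ltn_trans _ kl).
- by rewrite demandE rl ltnNge lk.
Qed.
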